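(* Under the standing assumptions, $\dim F(\pi,\pi_0)\le |S^{0}(\pi)|$. Moreover, if $\dim F(\pi,\pi_0)=0$ then $|S^{0}(\pi)|=0$.
   Context: Let $n\ge 1$, $I=\{1,\dots,n\}$ and $X\subseteq\{0,1\}^n$. Standing assumptions: (a) the inequality $\pi^\top x\le \pi_0$ is valid for $X$ and supports $\mathrm{conv}(X)$, i.e. $\pi_0=\max_{x\in X}\pi^\top x$; (b) for every $i\in I$ there exist $x,x'\in X$ with $x_i=0$ and $x'_i=1$. The face is $F(\pi,\pi_0):=\{x\in\mathrm{conv}(X):\pi^\top x=\pi_0\}$. The disjunctive slack vector $\lambda(\pi)$ is defined by $\lambda^0_i(\pi):=\max_{x\in X}\{\pi^\top x: x_i=0\}$, $\lambda^1_i(\pi):=\max_{x\in X}\{\pi^\top x:x_i=1\}$, $\lambda_i(\pi):=\lambda^0_i(\pi)-\lambda^1_i(\pi)$; $S^{0}(\pi)=\{i\in I:\lambda_i(\pi)=0\}$. *)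

From HB Require Import structures.
From mathcomp Require Import all_boot all_order all_algebra.
Set Implicit Arguments. Unset Strict Implicit. Unset Printing Implicit Defensive.
Import Order.TTheory GRing.Theory Num.Theory.
Local Open Scope ring_scope.

Section Defs.
Variables (R : realFieldType) (n : nat).

Definition vec (x : {ffun 'I_n -> bool}) : 'rV[R]_n := \row_i (x i)%:R.

Definition dot (p y : 'rV[R]_n) : R := \sum_i p 0 i * y 0 i.

(* Maximum of a (nonempty) list of reals; 0 on the empty list (never used
   under the standing assumptions). *)
Definition seqmax (s : seq R) : R := foldr Num.max (head 0 s) s.

Definition lam (X : {set {ffun 'I_n -> bool}}) (p : 'rV[R]_n) (b : bool) (i : 'I_n) : R :=
  seqmax [seq dot p (vec x) | x : {ffun 'I_n -> bool} <- enum X & x i == b].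

Definition lambda X p i : R := lam X p false i - lam X p true i.

Definition S0 X p : {set 'I_n} := [set i | lambda X p i == 0].

Definition conv (X : {set {ffun 'I_n -> bool}}) (y : 'rV[R]_n) : Prop :=
  exists w : {ffun {ffun 'I_n -> bool} -> R},
    [/\ forall x, x \in X -> 0 <= w x,
        \sum_(x in X) w x = 1
      & y = \sum_(x in X) w x *: vec x].

Definition face X p (p0 : R) (y : 'rV[R]_n) : Prop := conv X y /\ dot p y = p0.

Definition aff_indep k (p : 'I_k.+1 -> 'rV[R]_n) : bool :=
  row_free (\matrix_(i < k, j < n) (p (lift ord0 i) 0 j - p ord0 0 j)).

Definition affdim (S : 'rV[R]_n -> Prop) (d : nat) : Prop :=
  (exists p : 'I_d.+1 -> 'rV[R]_n, (forall j, S (p j)) /\ aff_indep p) /\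
  (forall k (p : 'I_k.+1 -> 'rV[R]_n), (forall j, S (p j)) -> aff_indep p -> (k <= d)%N).

End Defs.

From HB Require Import structures.
From mathcomp Require Import all_boot all_order all_algebra.
Import Order.TTheory GRing.Theory Num.Theory.
Local Open Scope ring_scope.
Set Implicit Arguments. Unset Strict Implicit. Unset Printing Implicit Defensive.

(* If lambda_i(pi) <> 0, only one of lambda^0_i, lambda^1_i equals pi0, so all
   optimal vertices of X share their i-th coordinate.  Every point of the face
   is a convex combination of optimal vertices, hence the face lies in the
   affine subspace fixing the coordinates outside S^0, of dimension |S^0|.  If
   the face is a single point there is a unique optimal vertex x*, and then
   lambda^(1 - x*_i)_i < pi0 = lambda^(x*_i)_i for every i: S^0 is empty. *)

Section SeqMax.
Variable R : realFieldType.

Lemma foldr_max_mem (b : R) s : foldr Num.max b s \in b :: s.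
Proof.
elim: s => [|a s IHs] /=; first exact: mem_head.
rewrite maxEle !inE in IHs *; case: ifP => _; last by rewrite eqxx orbT.
by case/orP: IHs => ->; rewrite ?orbT.
Qed.

Lemma foldr_max_ge (b : R) s y : y \in b :: s -> y <= foldr Num.max b s.
Proof.
elim: s => [|a s IHs] /=; first by rewrite inE => /eqP ->.
rewrite le_max !inE => /or3P[yb|/eqP->|ys]; first by rewrite IHs ?inE ?yb ?orbT.
  by rewrite lexx.
by rewrite IHs ?inE ?ys ?orbT.
Qed.

Lemma seqmax_mem (s : seq R) : s != [::] -> seqmax s \in s.
Proof.
case: s => [|a s] // _; have := foldr_max_mem a (a :: s).
by rewrite /seqmax /= inE => /orP[/eqP ->|//]; exact: mem_head.
Qed.

Lemma seqmax_ge (s : seq R) y : y \in s -> y <= seqmax s.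
Proof. by case: s => [|a s] // ys; apply: foldr_max_ge; rewrite inE ys orbT. Qed.

End SeqMax.

Lemma mxrank_le_card_support (F : fieldType) (m n : nat) (S : {set 'I_n})
    (M : 'M[F]_(m, n)) :
  (forall i j, j \notin S -> M i j = 0) -> (\rank M <= #|S|)%N.
Proof.
move=> M0.
pose P : 'M[F]_(#|S|, n) := \matrix_(k, j) (j == enum_val k)%:R.
suff -> : M = colsub enum_val M *m P.
  exact: leq_trans (mxrankM_maxl _ _) (rank_leq_col _).
apply/matrixP => i j; rewrite mxE.
under eq_bigr do rewrite !mxE.
rewrite -(big_enum_val (fun x => M i x * (j == x)%:R)) /=.
case: (boolP (j \in S)) => jS.
  rewrite (bigD1 j) //= eqxx mulr1 big1 ?addr0 // => x /andP[_ xj].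
  by rewrite eq_sym (negbTE xj) mulr0.
rewrite M0 // big1 // => x xS.
by case: eqP => [jx|_]; [rewrite jx xS in jS | rewrite mulr0].
Qed.

Lemma vec_inj (R : realFieldType) (n : nat) : injective (@vec R n).
Proof.
move=> x y /rowP exy; apply/ffunP => j; have := exy j; rewrite !mxE.
by case: (x j); case: (y j) => // /eqP; rewrite eqr_nat.
Qed.

Lemma aff_indep_pair (R : realFieldType) (n : nat) (p : 'I_2 -> 'rV[R]_n) :
  aff_indep p = (p ord_max != p ord0).
Proof.
rewrite /aff_indep /row_free rank_rV eqb1 -[in RHS]subr_eq0; congr (_ != 0).
by apply/rowP => j; rewrite !mxE /=; congr (p _ 0 j - _); apply: val_inj.
Qed.

Section Face.
Variables (R : realFieldType) (n : nat).
Variables (X : {set {ffun 'I_n -> bool}}) (pi : 'rV[R]_n) (pi0 : R).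

Lemma lam_ge x b i : x \in X -> x i = b -> dot pi (vec R x) <= lam X pi b i.
Proof.
by move=> xX xi; apply/seqmax_ge/map_f; rewrite mem_filter mem_enum xX xi eqxx.
Qed.

Lemma lam_attained x b i : x \in X -> x i = b ->
  exists2 z, (z \in X) && (z i == b) & lam X pi b i = dot pi (vec R z).
Proof.
move=> xX xi.
set vals := [seq dot pi (vec R z) | z : {ffun 'I_n -> bool} <- enum X & z i == b].
have x_vals : dot pi (vec R x) \in vals.
  by apply: map_f; rewrite mem_filter mem_enum xX xi eqxx.
have /mapP[z] : seqmax vals \in vals.
  by apply: seqmax_mem; apply: contraTneq x_vals => ->.
by rewrite mem_filter mem_enum andbC; exists z.
Qed.

Lemma dot_conv (w : {ffun {ffun 'I_n -> bool} -> R}) :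
  dot pi (\sum_(x in X) w x *: vec R x) = \sum_(x in X) w x * dot pi (vec R x).
Proof.
rewrite /dot; under eq_bigr do rewrite summxE mulr_sumr.
rewrite exchange_big /=; apply: eq_bigr => x _; rewrite mulr_sumr.
by apply: eq_bigr => j _; rewrite mxE mulrCA.
Qed.

Hypothesis pi_valid : forall x, x \in X -> dot pi (vec R x) <= pi0.

Lemma lam_opt x b i : x \in X -> x i = b -> dot pi (vec R x) = pi0 ->
  lam X pi b i = pi0.
Proof.
move=> xX xi xopt; apply/eqP; rewrite eq_le -{2}xopt lam_ge // andbT.
by have [z /andP[zX _] ->] := lam_attained xX xi; apply: pi_valid.
Qed.

Lemma lam_lt_opt x b i : x \in X -> x i = b ->
  (forall z, z \in X -> z i = b -> dot pi (vec R z) != pi0) ->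
  lam X pi b i < pi0.
Proof.
move=> xX xi nopt; have [z /andP[zX /eqP zi] ->] := lam_attained xX xi.
by rewrite lt_neqAle nopt ?pi_valid.
Qed.

(* The slacks [pi0 - pi x] are nonnegative and their [w]-average vanishes. *)
Lemma face_weight_eq0 (w : {ffun {ffun 'I_n -> bool} -> R}) x :
  (forall z, z \in X -> 0 <= w z) -> \sum_(z in X) w z = 1 ->
  dot pi (\sum_(z in X) w z *: vec R z) = pi0 ->
  x \in X -> dot pi (vec R x) != pi0 -> w x = 0.
Proof.
move=> w_ge0 w_sum1 wopt xX xnopt.
have slack0 : \sum_(z in X) w z * (pi0 - dot pi (vec R z)) = 0.
  under eq_bigr do rewrite mulrBr.
  by rewrite sumrB -mulr_suml w_sum1 mul1r -dot_conv wopt subrr.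
have slack_ge0 z : z \in X -> 0 <= w z * (pi0 - dot pi (vec R z)).
  by move=> zX; rewrite mulr_ge0 ?w_ge0 // subr_ge0 pi_valid.
have /eqP := psumr_eq0P slack_ge0 slack0 xX.
by rewrite mulf_eq0 subr_eq0 [pi0 == _]eq_sym (negbTE xnopt) orbF => /eqP.
Qed.

Lemma opt_eq_notin_S0 i x x' : i \notin S0 X pi ->
  x \in X -> dot pi (vec R x) = pi0 -> x' \in X -> dot pi (vec R x') = pi0 ->
  x i = x' i.
Proof.
move=> iS0 xX xopt x'X x'opt; apply: contraNeq iS0.
rewrite inE /lambda subr_eq0.
by case xi: (x i); case x'i: (x' i) => // _;
  rewrite (lam_opt xX xi xopt) (lam_opt x'X x'i x'opt).
Qed.

Lemma face_coord_notin_S0 i xs y : i \notin S0 X pi ->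
  xs \in X -> dot pi (vec R xs) = pi0 -> face X pi pi0 y -> y 0 i = (xs i)%:R.
Proof.
move=> iS0 xsX xsopt [[w [w_ge0 w_sum1 ->]] wopt].
rewrite summxE; transitivity (\sum_(x in X) w x * (xs i)%:R).
  apply: eq_bigr => x xX; rewrite !mxE.
  have [xopt|xnopt] := eqVneq (dot pi (vec R x)) pi0.
    by rewrite (opt_eq_notin_S0 iS0 xX xopt xsX xsopt).
  by rewrite (face_weight_eq0 w_ge0 w_sum1 wopt xX xnopt) !mul0r.
by rewrite -mulr_suml w_sum1 mul1r.
Qed.

Lemma vec_in_face x :
  x \in X -> dot pi (vec R x) = pi0 -> face X pi pi0 (vec R x).
Proof.
move=> xX xopt; split=> //; exists [ffun z => (z == x)%:R]; split.
- by move=> z _; rewrite ffunE ler0n.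
- rewrite (bigD1 x) //= ffunE eqxx big1 ?addr0 // => z /andP[_ zx].
  by rewrite ffunE (negbTE zx).
- rewrite (bigD1 x) //= ffunE eqxx scale1r big1 ?addr0 // => z /andP[_ zx].
  by rewrite ffunE (negbTE zx) scale0r.
Qed.

Lemma aff_indep_face_le_S0 xs k (p : 'I_k.+1 -> 'rV[R]_n) :
  xs \in X -> dot pi (vec R xs) = pi0 ->
  (forall j, face X pi pi0 (p j)) -> aff_indep p -> (k <= #|S0 X pi|)%N.
Proof.
move=> xsX xsopt p_face /eqP <-; apply: mxrank_le_card_support => a c cS0.
by rewrite mxE !(face_coord_notin_S0 cS0 xsX xsopt) ?subrr.
Qed.

Lemma S0_eq0_unique_opt xs :
  (forall i : 'I_n, (exists2 x, x \in X & x i = false) /\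
                    (exists2 x, x \in X & x i = true)) ->
  xs \in X -> dot pi (vec R xs) = pi0 ->
  (forall x, x \in X -> dot pi (vec R x) = pi0 -> x = xs) ->
  S0 X pi = set0.
Proof.
move=> hboth xsX xsopt opt_xs.
apply/setP => i; rewrite inE in_set0 /lambda subr_eq0.
have [z zX zi] : exists2 z, z \in X & z i = ~~ xs i.
  have [[z0 ? ?] [z1 ? ?]] := hboth i.
  by case: (xs i); [exists z0 | exists z1].
have lam_lt : lam X pi (~~ xs i) i < pi0.
  apply: (lam_lt_opt zX zi) => x xX xi; apply/eqP => /(opt_xs x xX) xxs.
  by move: xi; rewrite xxs; case: (xs i).
have lam_eq := lam_opt xsX (erefl (xs i)) xsopt.
by case: (xs i) lam_lt lam_eq => /= /lt_eqF + ->; rewrite // eq_sym.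
Qed.

End Face.

Lemma affdim0_eq (R : realFieldType) (n : nat) (S : 'rV[R]_n -> Prop) y y' :
  affdim S 0 -> S y -> S y' -> y = y'.
Proof.
move=> [_ dmax] Sy Sy'; apply/eqP; apply: contraT => yy'.
pose p (k : 'I_2) := if k == ord0 then y' else y.
have := dmax 1%N p; rewrite aff_indep_pair /p /= yy'.
by apply=> // k; case: ifP.
Qed.

Theorem lemma2 (R : realFieldType) (n : nat) (X : {set {ffun 'I_n -> bool}})
  (pi : 'rV[R]_n) (pi0 : R)
  (hn : (1 <= n)%N)
  (hvalid : forall x, x \in X -> dot pi (vec R x) <= pi0)
  (hsupp : exists2 x, x \in X & dot pi (vec R x) = pi0)
  (hboth : forall i : 'I_n, (exists2 x, x \in X & x i = false) /\
                            (exists2 x, x \in X & x i = true)) :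
  forall d : nat, affdim (face X pi pi0) d ->
    (d <= #|S0 X pi|)%N /\ (d = 0%N -> #|S0 X pi| = 0%N).
Proof.
move=> d hd; have [xs xsX xsopt] := hsupp; split.
  have [[p [p_face p_indep]] _] := hd.
  exact: (aff_indep_face_le_S0 hvalid xsX xsopt p_face p_indep).
move=> d0; rewrite d0 in hd.
suff -> : S0 X pi = set0 by rewrite cards0.
apply: (S0_eq0_unique_opt hvalid hboth xsX xsopt) => x xX xopt.
by apply: vec_inj; apply: (affdim0_eq hd); apply: vec_in_face.
Qed.
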